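(* Let $k,\ell$ be positive integers. A matroid $M$ is $(k,\ell)$-uniform if and only if every rank-$(r(M)-k)$ flat of $M$ has nullity less than $\ell$.
   Context: A matroid is $(k,\ell)$-uniform if it has no minor isomorphic to $U_{k,k}\oplus U_{0,\ell}$. The nullity of a set $X$ in $M$ is $|X|-r_M(X)$. *)

From mathcomp Require Import all_boot.
Set Implicit Arguments. Unset Strict Implicit. Unset Printing Implicit Defensive.

Record matroid (T : finType) := Matroid {
  ground : {set T};
  rank : {set T} -> nat;
  rank_le_card : forall X : {set T}, X \subset ground -> rank X <= #|X|;
  rank_mono : forall X Y : {set T}, X \subset Y -> Y \subset ground -> rank X <= rank Y;
  rank_submod : forall X Y : {set T}, X \subset ground -> Y \subset ground ->
    rank (X :|: Y) + rank (X :&: Y) <= rank X + rank Y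
}.

Definition matroid_rank T (M : matroid T) : nat := rank M (ground M).

Definition nullity T (M : matroid T) (X : {set T}) : nat := #|X| - rank M X.

Definition is_flat T (M : matroid T) (F : {set T}) : Prop :=
  F \subset ground M /\
  forall e : T, e \in ground M -> e \notin F -> rank M F < rank M (e |: F).

Definition uniform_rank (r n : nat) : {set 'I_n} -> nat :=
  fun X => minn #|X| r.

Definition sum_rank (T1 T2 : finType) (r1 : {set T1} -> nat)
    (r2 : {set T2} -> nat) : {set (T1 + T2)%type} -> nat :=
  fun X => r1 [set x | inl x \in X] + r2 [set y | inr y \in X].

Definition UkkU0l_rank (k l : nat) : {set ('I_k + 'I_l)%type} -> nat :=
  sum_rank (@uniform_rank k k) (@uniform_rank 0 l).

(* The rank function of the minor M / C \ D (ground set E - (C u D)):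
   r_{M/C\D}(X) = r_M(X u C) - r_M(C). *)
Definition minor_rank T (M : matroid T) (C : {set T}) (X : {set T}) : nat :=
  rank M (X :|: C) - rank M C.

Definition has_minor_iso T (M : matroid T) (T' : finType)
    (E' : {set T'}) (r' : {set T'} -> nat) : Prop :=
  exists (C D : {set T}) (f : T -> T'),
    [/\ [/\ C \subset ground M, D \subset ground M & [disjoint C & D]],
        ({in ground M :\: (C :|: D) &, injective f}),
        f @: (ground M :\: (C :|: D)) = E' &
        forall X : {set T}, X \subset ground M :\: (C :|: D) ->
          r' (f @: X) = minor_rank M C X].

Definition kl_uniform T (k l : nat) (M : matroid T) : Prop :=
  ~ has_minor_iso M [set: ('I_k + 'I_l)%type] (@UkkU0l_rank k l).

From mathcomp Require Import all_boot zify.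
Set Implicit Arguments. Unset Strict Implicit. Unset Printing Implicit Defensive.

(* If M / C \ D is isomorphic to U_{k,k} (+) U_{0,l}, let A and B be the
   elements sent to the coloops and to the loops.  Then A raises the rank of C
   by k, so C :|: B has rank at most r(M) - k, while its nullity is at least
   |B| = l; a flat of rank r(M) - k containing C :|: B has at least that
   nullity.  Conversely, given a flat F of rank r(M) - k and nullity at least
   l, contract a basis C of F, keep l elements B of F :\: C (which become
   loops) and k elements A extending F to a spanning set (which become
   coloops), and delete everything else. *)

Lemma imset_setI_preimset (aT rT : finType) (f : aT -> rT) (D : {set aT}) (Y : {set rT}) :
  f @: (D :&: f @^-1: Y) = f @: D :&: Y.
Proof.
apply/setP => y; rewrite inE; apply/imsetP/andP => [[x] | [/imsetP[x xD ->] fxY]].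
  by rewrite !inE => /andP[xD fxY] ->; rewrite imset_f.
by exists x; rewrite // !inE xD.
Qed.

Lemma UkkU0l_rankE (k l : nat) (X : {set ('I_k + 'I_l)%type}) :
  @UkkU0l_rank k l X = #|[set i | inl i \in X]|.
Proof.
rewrite /UkkU0l_rank /sum_rank /uniform_rank minn0 addn0.
by apply/minn_idPl; rewrite -[leqRHS]card_ord max_card.
Qed.

Lemma exists_subset_card (T : finType) (A : {set T}) (n : nat) :
  n <= #|A| -> exists2 B : {set T}, B \subset A & #|B| = n.
Proof.
case/card_geqP => s [s_uniq s_size sA]; exists [set x in s].
  by apply/subsetP => x; rewrite inE => /sA.
by rewrite cardsE (card_uniqP s_uniq).
Qed.

Section SumLabel.

Variables (T : finType) (A B : {set T}) (k l : nat).

Definition set_index (S : {set T}) (n : nat) (x : T) : 'I_n.+1 :=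
  inord (index x (enum S)).

Lemma set_index_inj (S : {set T}) (n : nat) :
  #|S| <= n.+1 -> {in S &, injective (set_index S n)}.
Proof.
move=> Sn x y xS yS /(congr1 (@nat_of_ord _)).
have idx z : z \in S -> index z (enum S) < n.+1.
  by move=> zS; apply: leq_trans Sn; rewrite cardE index_mem mem_enum.
rewrite /set_index !inordK ?idx //; apply: (index_inj x); by rewrite mem_enum.
Qed.

Definition sum_label (x : T) : ('I_k.+1 + 'I_l.+1)%type :=
  if x \in A then inl (set_index A k x) else inr (set_index B l x).

Hypotheses (Ak : #|A| <= k.+1) (Bl : #|B| <= l.+1).

Lemma sum_label_inj : {in A :|: B &, injective sum_label}.
Proof.
move=> x y xAB yAB; rewrite /sum_label.
have inB z : z \in A :|: B -> z \notin A -> z \in B by case/setUP => [->|].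
case: ifP => xA; case: ifP => yA //= [].
  exact: set_index_inj.
by apply: (set_index_inj Bl); apply: inB; rewrite ?xA ?yA.
Qed.

Lemma card_inl_sum_label (X : {set T}) :
  #|[set i | inl i \in sum_label @: X]| = #|A :&: X|.
Proof.
have -> : [set i | inl i \in sum_label @: X] = set_index A k @: (A :&: X).
  apply/setP => i; rewrite inE; apply/imsetP/imsetP => [[x xX] | [x]].
    by rewrite /sum_label; case: ifP => // xA [->]; exists x; rewrite ?inE ?xA.
  by rewrite inE => /andP[xA xX] ->; exists x; rewrite // /sum_label xA.
by rewrite card_in_imset //; apply: sub_in2 (set_index_inj Ak) => x /setIP[].
Qed.

End SumLabel.

Section MatroidRank.

Variables (T : finType) (M : matroid T).
Local Notation E := (ground M).

Lemma rank0 : rank M set0 = 0.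
Proof. by have := rank_le_card (sub0set E); rewrite cards0; case: (rank M set0). Qed.

Lemma rankU_le_card (X Y : {set T}) :
  X \subset E -> Y \subset E -> rank M (X :|: Y) <= rank M X + #|Y|.
Proof.
by move=> XE YE; have := rank_submod XE YE; have := rank_le_card YE; lia.
Qed.

Lemma nullity_mono (X Y : {set T}) :
  X \subset Y -> Y \subset E -> nullity M X <= nullity M Y.
Proof.
move=> XY YE; have XE := subset_trans XY YE.
have YXE : Y :\: X \subset E by rewrite (subset_trans (subsetDl _ _) YE).
have XYX : X :|: Y :\: X = Y by rewrite -{1}(setIidPr XY) setID.
have := rankU_le_card XE YXE; rewrite XYX.
have := cardsDS XY; have := subset_leq_card XY; have := rank_le_card XE.
rewrite /nullity; lia.
Qed.

Lemma rankU_spanned (C Z Y : {set T}) :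
  C \subset Z -> Z \subset E -> Y \subset E ->
  rank M (C :|: Y) <= rank M C -> rank M (Z :|: Y) <= rank M Z.
Proof.
move=> CZ ZE YE CY; have CE := subset_trans CZ ZE.
have CYE : C :|: Y \subset E by rewrite subUset CE.
have := rank_submod ZE CYE; rewrite setUA (setUidPl CZ).
have : rank M C <= rank M (Z :&: (C :|: Y)).
  apply: rank_mono; first by rewrite subsetI CZ subsetUl.
  exact: subset_trans (subsetIl _ _) ZE.
lia.
Qed.

Lemma rankU_spanned_pointwise (C Z : {set T}) :
  C \subset E -> Z \subset E -> {in Z, forall e, rank M (e |: C) <= rank M C} ->
  rank M (C :|: Z) <= rank M C.
Proof.
move=> CE ZE spanZ; rewrite -(set_enum Z).
have : {subset enum Z <= Z} by move=> x; rewrite mem_enum.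
elim: (enum Z) => [|z s IH] /= sZ; first by rewrite set_nil setU0.
have zE : z \in E by rewrite (subsetP ZE) // sZ ?mem_head.
have sE : [set:: s] \subset E.
  by apply/subsetP=> x; rewrite inE => xs; rewrite (subsetP ZE) // sZ ?inE ?xs ?orbT.
have CsE : C :|: [set:: s] \subset E by rewrite subUset CE.
have zC : rank M (C :|: [set z]) <= rank M C by rewrite setUC spanZ ?sZ ?mem_head.
have := rankU_spanned (subsetUl C [set:: s]) CsE _ zC; rewrite sub1set zE setUC.
rewrite set_cons setUCA => /(_ isT) /leq_trans; apply; apply: IH => x xs.
by rewrite sZ // inE xs orbT.
Qed.

Lemma rankU1_le (X : {set T}) (e : T) :
  X \subset E -> e \in E -> rank M (e |: X) <= (rank M X).+1.
Proof.
move=> XE eE; rewrite setUC; have := @rankU_le_card X [set e] XE.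
by rewrite sub1set cards1 addn1 => /(_ eE).
Qed.

Lemma exists_rank_extension (S G : {set T}) :
  S \subset G -> G \subset E ->
  exists A : {set T}, [/\ A \subset G :\: S,
    rank M (S :|: A) = rank M S + #|A| & rank M (S :|: A) = rank M G].
Proof.
move=> SG GE; have SE := subset_trans SG GE.
pose indep (A : {set T}) := (A \subset G :\: S) && (rank M (S :|: A) == rank M S + #|A|).
have indep0 : indep set0 by rewrite /indep sub0set setU0 cards0 addn0 /=.
have [A /andP[AGS /eqP rSA] maxA] := arg_maxnP (fun A : {set T} => #|A|) indep0.
have AG : A \subset G := subset_trans AGS (subsetDl _ _).
have SAE : S :|: A \subset E by rewrite subUset SE (subset_trans AG).
have SAG : S :|: A \subset G by rewrite subUset SG.
exists A; split => //; apply/eqP; rewrite eqn_leq rank_mono //=.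
have : rank M G <= rank M (S :|: A :|: G).
  by apply: rank_mono; rewrite ?subsetUr // subUset SAE.
move/leq_trans; apply; apply: rankU_spanned_pointwise => // e eG.
rewrite leqNgt; apply/negP => rSAe.
have eSA : e \notin S :|: A.
  by apply: contraL rSAe => eSA; rewrite (setUidPr (_ : [set e] \subset _)) ?sub1set ?ltnn.
have eA : e \notin A by apply: contra eSA; rewrite inE => ->; rewrite orbT.
have /maxA : indep (e |: A).
  rewrite /indep subUset sub1set inE eG AGS andbT (contra _ eSA) /=; last first.
    by move=> eS; rewrite inE eS.
  move: rSAe; have := rankU1_le SAE (subsetP GE e eG).
  by rewrite setUCA cardsU1 eA /=; lia.
by rewrite /= cardsU1 eA ltnn.
Qed.

Lemma exists_flat_of_rank (S : {set T}) (t : nat) :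
  S \subset E -> rank M S <= t -> t <= rank M E ->
  exists X : {set T}, [/\ S \subset X, is_flat M X & rank M X = t].
Proof.
move=> SE rSt tE.
pose below (X : {set T}) := [&& S \subset X, X \subset E & rank M X <= t].
have belowS : below S by rewrite /below subxx SE rSt.
have [X /and3P[SX XE rXt] maxX] := arg_maxnP (fun X : {set T} => #|X|) belowS.
have rXe : forall e, e \in E -> e \notin X -> t < rank M (e |: X).
  move=> e eE eX; rewrite ltnNge; apply/negP => rXe.
  have /maxX : below (e |: X).
    by rewrite /below rXe subUset sub1set eE XE (subset_trans SX (subsetUr _ _)).
  by rewrite /= cardsU1 eX ltnn.
have rX : rank M X = t.
  apply/eqP; rewrite eqn_leq rXt /= leqNgt; apply/negP => rXlt.
  have [EX | /subsetPn[e eE eX]] := boolP (E \subset X).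
    by have := rank_mono EX XE; lia.
  by have := rXe e eE eX; have := rankU1_le XE eE; lia.
by exists X; split => //; split => // e eE eX; rewrite rX rXe.
Qed.

Lemma rankU_indep_sub (F A A' : {set T}) :
  F \subset E -> A \subset E -> rank M (F :|: A) = rank M F + #|A| ->
  A' \subset A -> rank M (F :|: A') = rank M F + #|A'|.
Proof.
move=> FE AE rFA A'A; have A'E := subset_trans A'A AE.
have FA'E : F :|: A' \subset E by rewrite subUset FE.
have := rankU_le_card FA'E (subset_trans (subsetDl A A') AE).
rewrite -setUA -{1}(setIidPr A'A) setID rFA.
have := rankU_le_card FE A'E; have := cardsID A' A; rewrite (setIidPr A'A); lia.
Qed.

Lemma minor_rank_contract_spanning (F C A B X : {set T}) :
  C \subset F -> F \subset E -> rank M C = rank M F ->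
  A \subset E -> rank M (F :|: A) = rank M F + #|A| ->
  B \subset F -> X \subset A :|: B -> minor_rank M C X = #|A :&: X|.
Proof.
move=> CF FE rCF AE rFA BF XAB; rewrite /minor_rank.
have CE := subset_trans CF FE; have AXE := subset_trans (subsetIl A X) AE.
have CAXE : C :|: A :&: X \subset E by rewrite subUset CE.
have spanF : rank M (C :|: A :&: X :|: F) <= rank M (C :|: A :&: X).
  by apply: rankU_spanned (subsetUl _ _) CAXE FE _; rewrite (setUidPr CF) rCF.
have rCAX : rank M (C :|: A :&: X) = rank M C + #|A :&: X|.
  have := rankU_indep_sub FE AE rFA (subsetIl A X).
  have := rankU_le_card CE AXE.
  by rewrite setUAC (setUidPr CF) in spanF; lia.
have XCsub : C :|: A :&: X \subset X :|: C.
  by rewrite [X :|: C]setUC setUS ?subsetIr.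
have XCsup : X :|: C \subset C :|: A :&: X :|: F.
  apply/subsetP => x; rewrite !inE; case/orP => [xX | ->] //.
  have := subsetP XAB x xX; rewrite inE xX andbT.
  by case/orP => [-> | /(subsetP BF) ->]; rewrite ?orbT.
have CAXFE : C :|: A :&: X :|: F \subset E by rewrite subUset CAXE.
have := rank_mono XCsub (subset_trans XCsup CAXFE); have := rank_mono XCsup CAXFE.
lia.
Qed.

End MatroidRank.

Section UkkU0lMinors.

Variables (T : finType) (M : matroid T).
Local Notation E := (ground M).

Lemma has_UkkU0l_minor (k l : nat) (C A B : {set T}) :
  C \subset E -> A :|: B \subset E :\: C -> [disjoint A & B] ->
  #|A| = k.+1 -> #|B| = l.+1 ->
  (forall X : {set T}, X \subset A :|: B -> minor_rank M C X = #|A :&: X|) ->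
  has_minor_iso M [set: ('I_k.+1 + 'I_l.+1)%type] (@UkkU0l_rank k.+1 l.+1).
Proof.
move=> CE ABEC AB Ak Bl rC.
have labelI := @sum_label_inj T A B k l (eq_leq Ak) (eq_leq Bl).
pose D := E :\: (C :|: (A :|: B)).
have ABE' : E :\: (C :|: D) = A :|: B.
  apply/setP => x; rewrite !inE; have := subsetP ABEC x; rewrite !inE.
  by case: (x \in A); case: (x \in B); case: (x \in C); case: (x \in E) => // /(_ isT).
exists C, D, (sum_label A B k l); split.
- split => //; first exact: subsetDl.
  by rewrite disjoints_subset; apply/subsetP => x xC; rewrite !inE xC.
- by rewrite ABE'.
- rewrite ABE'; apply/eqP; rewrite eqEcard subsetT cardsT card_sum !card_ord.
  by rewrite /= (card_in_imset labelI) cardsU (disjoint_setI0 AB) cards0 subn0 Ak Bl.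
by move=> X; rewrite ABE' UkkU0l_rankE card_inl_sum_label ?Ak // => /rC ->.
Qed.

Lemma has_UkkU0l_minor_of_nullity (k l : nat) (F : {set T}) :
  F \subset E -> rank M F + k.+1 = rank M E -> l.+1 <= nullity M F ->
  has_minor_iso M [set: ('I_k.+1 + 'I_l.+1)%type] (@UkkU0l_rank k.+1 l.+1).
Proof.
move=> FE rF nF.
have [C [CF rC rCF]] := exists_rank_extension (sub0set F) FE.
rewrite setD0 set0U rank0 in CF rC rCF.
have [A [AEF rFA rFAE]] := exists_rank_extension FE (subxx E).
have [B BFC Bl] : exists2 B : {set T}, B \subset F :\: C & #|B| = l.+1.
  by apply: exists_subset_card; rewrite cardsDS //; move: nF; rewrite /nullity; lia.
have AEC : A \subset E :\: C := subset_trans AEF (setDS _ CF).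
have BF : B \subset F := subset_trans BFC (subsetDl _ _).
apply: (@has_UkkU0l_minor k l C A B).
- exact: subset_trans CF FE.
- by rewrite subUset AEC (subset_trans BFC (setSD _ FE)).
- rewrite disjoints_subset; apply/subsetP => x /(subsetP AEF).
  by rewrite !inE => /andP[xF _]; apply: contra xF => /(subsetP BF).
- by move: rFAE; rewrite rFA; lia.
- exact: Bl.
have AE : A \subset E := subset_trans AEF (subsetDl _ _).
by move=> X; apply: minor_rank_contract_spanning CF FE rCF AE rFA BF.
Qed.

Lemma exists_flat_of_UkkU0l_minor (k l : nat) :
  has_minor_iso M [set: ('I_k + 'I_l)%type] (@UkkU0l_rank k l) ->
  exists F : {set T}, [/\ is_flat M F, rank M F + k = rank M E & l <= nullity M F].
Proof.
case=> C [D [f [[CE _ _] _ fE' rf]]].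
set E' := E :\: (C :|: D) in fE' rf.
have E'E : E' \subset E := subsetDl _ _.
pose Lk : {set ('I_k + 'I_l)%type} := [set inl i | i : 'I_k].
pose Rl : {set ('I_k + 'I_l)%type} := [set inr j | j : 'I_l].
pose A := E' :&: f @^-1: Lk.
pose B := E' :&: f @^-1: Rl.
have fA : f @: A = Lk by rewrite imset_setI_preimset fE' setTI.
have fB : f @: B = Rl by rewrite imset_setI_preimset fE' setTI.
have AE : A \subset E := subset_trans (subsetIl _ _) E'E.
have BE : B \subset E := subset_trans (subsetIl _ _) E'E.
have rA : rank M (A :|: C) = rank M C + k.
  have := rf A (subsetIl _ _); rewrite fA UkkU0l_rankE /minor_rank.
  have -> : [set i | inl i \in Lk] = [set: 'I_k].
    by apply/setP => i; rewrite !inE imset_f.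
  have ACE : A :|: C \subset E by rewrite subUset AE.
  by rewrite cardsT card_ord; have := rank_mono (subsetUr A C) ACE; lia.
have rB : rank M (C :|: B) <= rank M C.
  have := rf B (subsetIl _ _); rewrite fB UkkU0l_rankE /minor_rank setUC.
  have -> : [set i | inl i \in Rl] = set0.
    by apply/setP => i; rewrite !inE; apply/imsetP => -[].
  rewrite cards0; lia.
have Bl : l <= #|B|.
  have := leq_imset_card f B; rewrite fB card_imset ?cardsT ?card_ord //.
  exact: inr_inj.
have CB : C :&: B = set0.
  by apply/setP => x; rewrite !inE; case: (x \in C); rewrite ?andbF.
have CBE : C :|: B \subset E by rewrite subUset CE.
have rE : rank M C + k <= rank M E by rewrite -rA rank_mono // subUset AE.
have rCBk : rank M (C :|: B) <= rank M E - k by lia.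
have [F [CBF flatF rF]] := exists_flat_of_rank CBE rCBk (leq_subr _ _).
exists F; split => //; first by lia.
have := nullity_mono CBF (proj1 flatF); have := rank_le_card CE.
by rewrite /nullity cardsU CB cards0 subn0; lia.
Qed.

End UkkU0lMinors.

Theorem proposition1p4 (T : finType) (k l : nat) (M : matroid T) :
  0 < k -> 0 < l ->
  (kl_uniform k l M <->
   forall F : {set T}, is_flat M F -> rank M F + k = matroid_rank M ->
     nullity M F < l).
Proof.
move=> k_gt0 l_gt0; split => [klU F flatF rF | flats_small minorM].
  rewrite ltnNge; apply/negP => nF; apply: klU.
  case: k k_gt0 rF => // k _ rF; case: l l_gt0 nF => // l _ nF.
  exact: has_UkkU0l_minor_of_nullity (proj1 flatF) rF nF.
have [F [flatF rF nF]] := exists_flat_of_UkkU0l_minor minorM.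
by have := flats_small F flatF rF; lia.
Qed.
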